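(* Let $T$ be an $\mathcal O$-operator on a Lie algebra $\mathfrak g$ with respect to a representation $(V;\rho)$, and let $T^1_t=T+t\mathfrak T_1$ and $T^2_t=T+t\mathfrak T_2$ be one-parameter infinitesimal deformations of $T$. If $T^1_t$ and $T^2_t$ are equivalent, then $\mathfrak T_1$ and $\mathfrak T_2$ lie in the same cohomology class of $\mathcal H^1(V,\mathfrak g)$.
   Context: An $\mathcal O$-operator: linear $T:V\to\mathfrak g$ with $[Tu,Tv]=T(\rho(Tu)(v)-\rho(Tv)(u))$. A one-parameter infinitesimal deformation of $T$ is $T+t\mathfrak T$ with $\mathfrak T:V\to\mathfrak g$ linear such that $T+t\mathfrak T$ is an $\mathcal O$-operator for all scalars $t$ (then $\mathfrak T$ is a $1$-cocycle below). A homomorphism from an $\mathcal O$-operator $T'$ to $T$ is a pair of a Lie algebra homomorphism $\phi_{\mathfrak g}:\mathfrak g\to\mathfrak g$ and a linear $\phi_V:V\to V$ with $T\circ\phi_V=\phi_{\mathfrak g}\circ T'$ and $\phi_V\rho(x)(u)=\rho(\phi_{\mathfrak g}(x))(\phi_V(u))$. The deformations $T^1_t,T^2_t$ are equivalent if there is $x\in\mathfrak g$ such that $(\mathrm{Id}_{\mathfrak g}+t\,\mathrm{ad}_x,\mathrm{Id}_V+t\rho(x))$ is a homomorphism from $T^2_t$ to $T^1_t$. Cohomology: $[u,v]_T=\rho(Tu)(v)-\rho(Tv)(u)$ is a Lie bracket on $V$, $\bar\rho(u)(x)=[Tu,x]+T\rho(x)(u)$ is a representation of $(V,[\cdot,\cdot]_T)$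 on $\mathfrak g$, and $\mathcal H^k(V,\mathfrak g)$ is the Chevalley–Eilenberg cohomology of $(V,[\cdot,\cdot]_T)$ with coefficients in $(\mathfrak g,\bar\rho)$, with coboundary $d_{\bar\rho}f(u_1,\dots,u_{k+1})=\sum_{i}(-1)^{i+1}[Tu_i,f(\dots,\hat u_i,\dots)]+\sum_i(-1)^{i+1}T\rho(f(\dots,\hat u_i,\dots))(u_i)+\sum_{i<j}(-1)^{i+j}f([u_i,u_j]_T,u_1,\dots,\hat u_i,\dots,\hat u_j,\dots,u_{k+1})$ on $\mathrm{Hom}(\wedge^kV,\mathfrak g)$. *)

From HB Require Import structures.
From mathcomp Require Import all_boot all_order all_algebra.
Set Implicit Arguments. Unset Strict Implicit. Unset Printing Implicit Defensive.
Import GRing.Theory.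
Local Open Scope ring_scope.

Definition lin (K : fieldType) (U W : lmodType K) (f : U -> W) : Prop :=
  forall (a : K) (u v : U), f (a *: u + v) = a *: f u + f v.

Definition is_lie_bracket (K : fieldType) (g : lmodType K) (br : g -> g -> g) : Prop :=
  [/\ forall x, lin (br x),
      forall y, lin (fun x => br x y),
      forall x, br x x = 0
    & forall x y z, br x (br y z) + br y (br z x) + br z (br x y) = 0].

Definition is_rep (K : fieldType) (g V : lmodType K) (br : g -> g -> g)
    (rho : g -> V -> V) : Prop :=
  [/\ forall x, lin (rho x),
      forall u, lin (fun x => rho x u)
    & forall x y u, rho (br x y) u = rho x (rho y u) - rho y (rho x u)].

Definition is_Ooperator (K : fieldType) (g V : lmodType K) (br : g -> g -> g)
    (rho : g -> V -> V) (T : V -> g) : Prop :=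
  lin T /\ forall u v, br (T u) (T v) = T (rho (T u) v - rho (T v) u).

Definition is_lie_hom (K : fieldType) (g : lmodType K) (br : g -> g -> g)
    (phi : g -> g) : Prop :=
  lin phi /\ forall x y, phi (br x y) = br (phi x) (phi y).

Definition is_Oop_hom (K : fieldType) (g V : lmodType K) (br : g -> g -> g)
    (rho : g -> V -> V) (T' T : V -> g) (phig : g -> g) (phiV : V -> V) : Prop :=
  [/\ is_lie_hom br phig, lin phiV,
      forall u, T (phiV u) = phig (T' u)
    & forall x u, phiV (rho x u) = rho (phig x) (phiV u)].

Definition is_inf_deformation (K : fieldType) (g V : lmodType K) (br : g -> g -> g)
    (rho : g -> V -> V) (T T1 : V -> g) : Prop :=
  lin T1 /\ forall t : K, is_Ooperator br rho (fun u => T u + t *: T1 u).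

Definition equiv_deformations (K : fieldType) (g V : lmodType K) (br : g -> g -> g)
    (rho : g -> V -> V) (T T1 T2 : V -> g) : Prop :=
  exists x : g, forall t : K,
    is_Oop_hom br rho (fun u => T u + t *: T2 u) (fun u => T u + t *: T1 u)
      (fun y => y + t *: br x y) (fun u => u + t *: rho x u).

Definition bracketT (K : fieldType) (g V : lmodType K) (rho : g -> V -> V)
    (T : V -> g) (u v : V) : V := rho (T u) v - rho (T v) u.

(* Chevalley-Eilenberg coboundary d_{rhobar} on 0-cochains (elements of g) *)
Definition d0 (K : fieldType) (g V : lmodType K) (br : g -> g -> g)
    (rho : g -> V -> V) (T : V -> g) (x : g) : V -> g :=
  fun u => br (T u) x + T (rho x u).

(* Chevalley-Eilenberg coboundary d_{rhobar} on 1-cochains f : V -> g *)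
Definition d1 (K : fieldType) (g V : lmodType K) (br : g -> g -> g)
    (rho : g -> V -> V) (T : V -> g) (f : V -> g) : V -> V -> g :=
  fun u1 u2 => br (T u1) (f u2) - br (T u2) (f u1)
               + T (rho (f u2) u1) - T (rho (f u1) u2)
               - f (bracketT rho T u1 u2).

Definition is_1cocycle (K : fieldType) (g V : lmodType K) (br : g -> g -> g)
    (rho : g -> V -> V) (T : V -> g) (f : V -> g) : Prop :=
  lin f /\ forall u1 u2, d1 br rho T f u1 u2 = 0.

Definition same_H1_class (K : fieldType) (g V : lmodType K) (br : g -> g -> g)
    (rho : g -> V -> V) (T : V -> g) (f1 f2 : V -> g) : Prop :=
  [/\ is_1cocycle br rho T f1, is_1cocycle br rho T f2
    & exists x : g, forall u, f1 u - f2 u = d0 br rho T x u].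

(** Everything is read off coefficients of polynomial identities in [t],
    and an identity quadratic in [t] determines its linear coefficient as
    soon as [2 != 0].  The first-order part of the O-operator identity for
    [T + t T1] is exactly [d1 T1 = 0].  The first-order part of
    [(T + t T1) (u + t rho(x) u) = (Id + t ad_x) ((T + t T2) u)] gives
    [T1 - T2 = ad_x T - T rho(x) = d0 (- x)]. *)

From mathcomp Require Import all_boot all_order all_algebra.
Set Implicit Arguments. Unset Strict Implicit.
Import GRing.Theory.
Local Open Scope ring_scope.

Section LinearMaps.
Variables (K : fieldType) (U W : lmodType K) (f : U -> W).
Hypothesis lin_f : lin f.

Lemma lin0 : f 0 = 0.
Proof.
have := lin_f 1 0 0; rewrite !scale1r addr0 => f0.
by apply: (addrI (f 0)); rewrite addr0 -f0.
Qed.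

Lemma linD u v : f (u + v) = f u + f v.
Proof. by have := lin_f 1 u v; rewrite !scale1r. Qed.

Lemma linZ a u : f (a *: u) = a *: f u.
Proof. by rewrite -[a *: u]addr0 lin_f lin0 addr0. Qed.

Lemma linN u : f (- u) = - f u.
Proof. by rewrite -scaleN1r linZ scaleN1r. Qed.

Lemma linB u v : f (u - v) = f u - f v.
Proof. by rewrite linD linN. Qed.

End LinearMaps.

Section QuadraticIdentities.
Variables (K : fieldType) (W : lmodType K).

Lemma quadratic_coef1_eq (X P Q X' P' Q' : W) : (2%:R : K) != 0 ->
  (forall t : K, X + t *: P + (t * t) *: Q = X' + t *: P' + (t * t) *: Q') ->
  P = P'.
Proof.
move=> two_neq0 E.
have EX : X = X' by have := E 0; rewrite mul0r !scale0r !addr0.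
have Et t : t *: P + (t * t) *: Q = t *: P' + (t * t) *: Q'.
  by apply: (addrI X); rewrite !addrA E EX.
have := Et (-1); have := Et 1.
rewrite mulN1r opprK mulr1 !scale1r !scaleN1r => E1 EN1.
apply: (scalerI two_neq0); rewrite !scaler_nat !mulr2n.
have PP (R S : W) : R + R = (R + S) - (- R + S).
  by rewrite opprD opprK addrACA subrr addr0.
by rewrite (PP P Q) (PP P' Q') E1 EN1.
Qed.

Lemma scale_linear_quadratic (t : K) (A B C D : W) :
  A + t *: B + t *: (C + t *: D) = A + t *: (B + C) + (t * t) *: D.
Proof. by rewrite scalerDr scalerA !addrA scalerDr addrA. Qed.

Lemma lin_deformation_expand (U : lmodType K) (T T1 : U -> W) (t : K) a b :
  lin T -> lin T1 ->
  T (a + t *: b) + t *: T1 (a + t *: b)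
  = T a + t *: (T b + T1 a) + (t * t) *: T1 b.
Proof.
by move=> lT lT1; rewrite (linD lT) (linZ lT) (linD lT1) (linZ lT1)
  scale_linear_quadratic.
Qed.

End QuadraticIdentities.

Section Deformations.
Variables (K : fieldType) (g V : lmodType K).
Variables (br : g -> g -> g) (rho : g -> V -> V) (T : V -> g).
Hypotheses (two_neq0 : (2%:R : K) != 0) (lie_br : is_lie_bracket br).
Hypothesis rep_rho : is_rep br rho.
Hypothesis lin_T : lin T.

Lemma lie_anticomm x y : br x y = - br y x.
Proof.
have [brl brr br_alt _] := lie_br.
have := br_alt (x + y).
rewrite (linD (brl _)) !(linD (brr _)) !br_alt add0r addr0 => /eqP.
by rewrite addr_eq0 => /eqP ->; rewrite opprK.
Qed.

Lemma lie_bracket_expand (t : K) a b c d :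
  br (a + t *: b) (c + t *: d)
  = br a c + t *: (br b c + br a d) + (t * t) *: br b d.
Proof.
have [brl brr _ _] := lie_br.
by rewrite (linD (brl _)) (linZ (brl _)) !(linD (brr _)) !(linZ (brr _))
  scale_linear_quadratic.
Qed.

Lemma inf_deformation_1cocycle T1 :
  is_inf_deformation br rho T T1 -> is_1cocycle br rho T T1.
Proof.
move=> [lT1 deform]; split=> // u v.
have [_ rhor _] := rep_rho.
have first_order : br (T1 u) (T v) + br (T u) (T1 v)
    = T (rho (T1 u) v - rho (T1 v) u) + T1 (rho (T u) v - rho (T v) u).
  apply: (quadratic_coef1_eq (X := br (T u) (T v)) (Q := br (T1 u) (T1 v))
    (X' := T (rho (T u) v - rho (T v) u))
    (Q' := T1 (rho (T1 u) v - rho (T1 v) u)) two_neq0) => t.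
  have [_ Oop] := deform t.
  rewrite -lie_bracket_expand Oop !(linD (rhor _)) !(linZ (rhor _)).
  by rewrite opprD addrACA -scalerBr lin_deformation_expand.
rewrite /d1 /bracketT (lie_anticomm (T v)) opprK [br (T u) _ + _]addrC.
by rewrite first_order (linB lin_T) [T _ - _ + _]addrAC subrK addrAC addrK subrr.
Qed.

Lemma equiv_deformations_first_order T1 T2 x :
  lin T1 ->
  (forall t : K, is_Oop_hom br rho (fun u => T u + t *: T2 u)
     (fun u => T u + t *: T1 u) (fun y => y + t *: br x y)
     (fun u => u + t *: rho x u)) ->
  forall u, T (rho x u) + T1 u = T2 u + br x (T u).
Proof.
move=> lT1 hom u; have [brl _ _ _] := lie_br.
apply: (quadratic_coef1_eq (X := T u) (Q := T1 (rho x u)) (X' := T u)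
  (Q' := br x (T2 u)) two_neq0) => t.
have [_ _ intertwine _] := hom t.
rewrite -lin_deformation_expand // intertwine.
by rewrite (linD (brl _)) (linZ (brl _)) scale_linear_quadratic.
Qed.

Lemma equiv_deformations_cohomologous T1 T2 :
  lin T1 -> equiv_deformations br rho T T1 T2 ->
  exists x : g, forall u, T1 u - T2 u = d0 br rho T x u.
Proof.
move=> lT1 [x hom]; exists (- x) => u.
have [brl _ _ _] := lie_br; have [_ rhor _] := rep_rho.
have E := equiv_deformations_first_order lT1 hom u.
rewrite /d0 (linN (brl _)) (lie_anticomm (T u)) opprK (linN (rhor _)) (linN lin_T).
by apply: (addrI (T (rho x u))); rewrite addrA E addrAC subrr add0r addrC subrK.
Qed.

End Deformations.

Theorem theorem4p7 (K : fieldType) (g V : lmodType K)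
    (br : g -> g -> g) (rho : g -> V -> V) (T T1 T2 : V -> g) :
  [pchar K] =i pred0 ->
  is_lie_bracket br ->
  is_rep br rho ->
  is_Ooperator br rho T ->
  is_inf_deformation br rho T T1 ->
  is_inf_deformation br rho T T2 ->
  equiv_deformations br rho T T1 T2 ->
  same_H1_class br rho T T1 T2.
Proof.
move=> char0 lie_br rep_rho [lin_T _] def1 def2 equiv12.
have two_neq0 : (2%:R : K) != 0 by rewrite (pcharf0P _).1.
split; [exact: inf_deformation_1cocycle .. |].
exact: equiv_deformations_cohomologous def1.1 equiv12.
Qed.
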